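(* Let $n\geqslant 2$, let $\mathfrak{K}$ be an algebraically closed field of characteristic zero with a primitive $n$-th root of unity $\zeta$, let $G=(\mathbb{Z}/n)^3$ with basis $e_1,e_2,e_3$, and let $\omega$ be the $3$-cocycle $\omega(e_1^{a_{11}}e_2^{a_{12}}e_3^{a_{13}},e_1^{a_{21}}e_2^{a_{22}}e_3^{a_{23}},e_1^{a_{31}}e_2^{a_{32}}e_3^{a_{33}})=\zeta^{a_{11}a_{22}a_{33}}$. Let $z=e_1$. Then $\gamma_{\omega,z}(e_1^{a_{11}}e_2^{a_{12}}e_3^{a_{13}},e_1^{a_{21}}e_2^{a_{22}}e_3^{a_{23}})=\zeta^{a_{12}a_{23}+a_{11}a_{22}}$, which is cohomologically nontrivial, the twisted group algebra satisfies $\mathfrak{K}^{\gamma_{\omega,z}}G\cong\bigoplus_{i=1}^n\mathrm{M}_n(\mathfrak{K})$, and for $m\geqslant 1$ the class of $X_z^{\oplus m}$ lies in the image of the characteristic homomorphism $\mathrm{Iso}(\mathbf{Z}(\mathbb{B}(\mathbf{Vec}_G^\omega)))\to\mathrm{Z}(\mathbf{Ho}(\mathbb{B}(\mathbf{Vec}_G^\omega)))$ if and only if $n$ divides $m$.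
   Context: $\mathbf{Vec}_G^\omega$ is the fusion category of finite-dimensional $G$-graded $\mathfrak{K}$-vector spaces with simple objects $X_g$ ($g\in G$), $X_g\otimes X_h=X_{gh}$, and associativity constraint $(X_g\otimes X_h)\otimes X_k\to X_g\otimes(X_h\otimes X_k)$ given by $\omega(g,h,k)$. For central $z$, $\gamma_{\omega,z}(g,h)=\omega(g,h,z)\omega(g,z,h)^{-1}\omega(z,g,h)$, a $2$-cocycle. The twisted group algebra $\mathfrak{K}^{\gamma}G$ has basis $\{u_g\}$ with $u_gu_h=\gamma(g,h)u_{gh}$. $\mathbb{B}(\mathbf{Vec}_G^\omega)$ is the one-object bicategory with endomorphism category $\mathbf{Vec}_G^\omega$; its Drinfeld center is the usual Drinfeld center of $\mathbf{Vec}_G^\omega$ (objects $X$ with half-braidings $p(Y)\colon X\otimes Y\to Y\otimes X$ natural in $Y$, unital and satisfying the hexagon compatibility with $\otimes$). $\mathrm{Z}(\mathbf{Ho}(\mathbb{B}(\mathbf{Vec}_G^\omega)))$ is the monoid of isomorphism classes $[X]$ with $X\otimes Y\cong Y\otimes X$ for all $Y$, and the characteristic homomorphism sends $[(X,p)]\mapsto[X]$.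
   Formalization: The value of $\gamma_{\omega,z}(e_1^{a_{11}}e_2^{a_{12}}e_3^{a_{13}},e_1^{a_{21}}e_2^{a_{22}}e_3^{a_{23}})$ is given as $\zeta^{a_{12}a_{23}}$ in place of $\zeta^{a_{12}a_{23}+a_{11}a_{22}}$. The statement above fails without it. *)

From HB Require Import structures.
From mathcomp Require Import all_boot all_order all_algebra.
Set Implicit Arguments. Unset Strict Implicit. Unset Printing Implicit Defensive.
Import Order.TTheory GRing.Theory Num.Theory.
Local Open Scope ring_scope.

(* A finite-dimensional G-graded K-vector space is given by a homogeneous   *)
(* basis: a finite type [gbasis] together with a degree map [gdeg].  Every  *)
(* f.d. G-graded space has such a basis, so this is (a skeleton-free model  *)
(* of) the usual category.  Morphisms are grading-preserving matrices       *)
(* indexed by the two bases (row convention: f(x) = sum_y f x y * y).       *)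

Section VecGomega.
Variables (K : fieldType) (G : finType) (mulG : G -> G -> G) (oneG : G)
          (w : G -> G -> G -> K).

Record gvs := GVS { gbasis : finType; gdeg : gbasis -> G }.

Definition gmx (X Y : gvs) := gbasis X -> gbasis Y -> K.

Definition mx_eq (X Y : gvs) (f g : gmx X Y) : Prop :=
  forall x y, f x y = g x y.

Definition is_hom (X Y : gvs) (f : gmx X Y) : Prop :=
  forall x y, gdeg x != gdeg y -> f x y = 0.

Definition idm (X : gvs) : gmx X X := fun x x' => (x == x')%:R.
Arguments idm X : clear implicits.

Definition compm (X Y Z : gvs) (g : gmx Y Z) (f : gmx X Y) : gmx X Z :=
  fun x z => \sum_(y : gbasis Y) f x y * g y z.

Definition tens (X Y : gvs) : gvs :=
  @GVS (gbasis X * gbasis Y)%type (fun p => mulG (gdeg p.1) (gdeg p.2)).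

Definition tensm (X X' Y Y' : gvs) (f : gmx X X') (g : gmx Y Y') :
  gmx (tens X Y) (tens X' Y') :=
  fun p q => f p.1 q.1 * g p.2 q.2.

Definition unito : gvs := @GVS unit (fun _ => oneG).

Definition assoc (X Y Z : gvs) : gmx (tens (tens X Y) Z) (tens X (tens Y Z)) :=
  fun p q => ((p.1.1 == q.1) && (p.1.2 == q.2.1) && (p.2 == q.2.2))%:R
             * w (gdeg p.1.1) (gdeg p.1.2) (gdeg p.2).

Definition assoc_inv (X Y Z : gvs) : gmx (tens X (tens Y Z)) (tens (tens X Y) Z) :=
  fun p q => ((p.1 == q.1.1) && (p.2.1 == q.1.2) && (p.2.2 == q.2))%:R
             / w (gdeg p.1) (gdeg p.2.1) (gdeg p.2.2).

Arguments assoc X Y Z : clear implicits.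
Arguments assoc_inv X Y Z : clear implicits.

Definition giso (X Y : gvs) : Prop :=
  exists (f : gmx X Y) (g : gmx Y X),
    [/\ is_hom f, is_hom g, mx_eq (compm g f) (idm X) & mx_eq (compm f g) (idm Y)].

(* A half-braiding on X: p(Y) : X (x) Y -> Y (x) X, natural in Y, unital
   and satisfying the hexagon compatibility with the tensor product.
   (omega is normalised in our application, so the unitors are the
   canonical identifications X (x) 1 = X = 1 (x) X.) *)
Definition half_braiding (X : gvs) (p : forall Y : gvs, gmx (tens X Y) (tens Y X))
  : Prop :=
  [/\
      forall Y, is_hom (p Y),
      forall (Y Y' : gvs) (f : gmx Y Y'), is_hom f ->
        mx_eq (compm (p Y') (tensm (idm X) f)) (compm (tensm f (idm X)) (p Y)),
      (forall x x', p unito (x, tt) (tt, x') = (x == x')%:R) &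
      forall Y Z : gvs,
        mx_eq (p (tens Y Z))
          (compm (assoc_inv Y Z X)
            (compm (tensm (idm Y) (p Z))
              (compm (assoc Y X Z)
                (compm (tensm (p Y) (idm Z)) (assoc_inv X Y Z)))))].

(* [X] lies in the image of the characteristic homomorphism
   Iso(Z(B(Vec_G^omega))) -> Z(Ho(B(Vec_G^omega))), [(X',p)] |-> [X'] *)
Definition in_char_image (X : gvs) : Prop :=
  exists (X' : gvs) (p : forall Y : gvs, gmx (tens X' Y) (tens Y X')),
    half_braiding p /\ giso X' X.

End VecGomega.

Definition Xsum (G : finType) (g : G) (m : nat) : gvs G :=
  @GVS G 'I_m (fun _ => g).

Definition gamma_wz (K : fieldType) (G : Type) (w : G -> G -> G -> K) (z : G)
  (g h : G) : K := w g h z / w g z h * w z g h.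

Definition is_coboundary (K : fieldType) (G : zmodType) (gam : G -> G -> K) : Prop :=
  exists mu : G -> K, (forall g, mu g != 0) /\
    forall g h, gam g h = mu g * mu h / mu (g + h).

Section TwistedGroupAlgebra.
Variables (K : fieldType) (G : finZmodType) (gam : G -> G -> K).

(* K^gam G : elements are coefficient families a = sum_g a(g) u_g,
   with u_g u_h = gam(g,h) u_{gh} *)
Definition tga_mul (a b : {ffun G -> K}) : {ffun G -> K} :=
  [ffun k => \sum_(g : G) \sum_(h : G | g + h == k) a g * b h * gam g h].

Definition tga_one : {ffun G -> K} := [ffun g => (g == 0)%:R / gam 0 0].

Definition tga_iso_sum_mat (r d : nat) : Prop :=
  exists phi : {ffun G -> K} -> {ffun 'I_r -> 'M[K]_d},
    [/\ forall (c : K) (a b : {ffun G -> K}), phi [ffun g => c * a g + b g] = [ffun i => c *: phi a i + phi b i],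
        bijective phi,
        forall a b, phi (tga_mul a b) = [ffun i => phi a i *m phi b i] &
        phi tga_one = [ffun _ => 1%:M]].

End TwistedGroupAlgebra.

Definition G3 (n : nat) := ('Z_n * 'Z_n * 'Z_n)%type.
HB.instance Definition _ n := GRing.Zmodule.on (G3 n).
HB.instance Definition _ n := Finite.on (G3 n).

(* exponents a_1, a_2, a_3 of g = e1^a1 e2^a2 e3^a3, taken in {0,...,n-1} *)
Definition c1 n (g : G3 n) : nat := g.1.1.
Definition c2 n (g : G3 n) : nat := g.1.2.
Definition c3 n (g : G3 n) : nat := g.2.

Definition e1 (n : nat) : G3 n := (1, 0, 0).

Definition omega_ex (K : fieldType) (n : nat) (zeta : K) (g h k : G3 n) : K :=
  zeta ^+ (c1 g * c2 h * c3 k).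

(* Write gamma for gamma_(omega,e1); it is zeta^(a12 a23), so e1 is central for
   it, and coboundaries of an abelian group are symmetric whereas
   gamma(e2,e3) = zeta <> 1 = gamma(e3,e2).  The n x n clock-and-shift matrices
   form a projective representation with multiplier gamma; twisting it by the
   n characters of <e1> and inverting the discrete Fourier transform identifies
   K^gamma G with n copies of M_n(K).
   A half-braiding p on an object X concentrated in degree e1 yields, through
   naturality and the hexagon axiom, matrices R_g = p(X_g) with
   R_g R_h = gamma(g,h) R_(g+h).  Then A = R_e2 is invertible, B = R_e3 has
   B^n = 1 and A B = zeta B A, so tr B^k = 0 for 0 < k < n; the idempotent mean
   of the powers of B has trace dim X / n and integral rank, whence n | dim X.
   Conversely, the clock-and-shift matrices acting on K^q (x) K^n give a
   half-braiding on X_e1^(q n). *)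

From Pilot Require Import Defs.
From HB Require Import structures.
From mathcomp Require Import all_boot all_order all_algebra.
From mathcomp Require Import ring.
Set Implicit Arguments. Unset Strict Implicit. Unset Printing Implicit Defensive.
Import Order.TTheory GRing.Theory Num.Theory.
Local Open Scope ring_scope.

Lemma pchar0_natr_inj (R : idomainType) :
  [pchar R] =i pred0 -> injective (fun k : nat => k%:R : R).
Proof.
move/(pcharf0P _)=> R0 a b.
wlog le_ab : a b / (a <= b)%N => [wlog_le|] eq_ab.
  by case: (leqP a b) => [/wlog_le/(_ eq_ab) | /ltnW/wlog_le/(_ (esym eq_ab))/esym].
by apply/eqP; rewrite eqn_leq le_ab -subn_eq0 -R0 natrB //= eq_ab subrr.
Qed.

Section BigSums.
Variable R : comNzRingType.

Lemma sumr_pair (A B : finType) (F : A * B -> R) :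
  \sum_q F q = \sum_a \sum_b F (a, b).
Proof. by rewrite pair_bigA; apply: eq_bigr => -[]. Qed.

Lemma sumr_unit (F : unit -> R) : \sum_(b : unit) F b = F tt.
Proof. by rewrite (big_pred1 tt) // => -[]. Qed.

Lemma mulr_sum2 (I J : finType) (c : R) (F : I -> R) (G : J -> R) :
  c * (\sum_i F i) * (\sum_j G j) = \sum_i \sum_j c * F i * G j.
Proof.
rewrite -mulrA mulr_suml mulr_sumr; apply: eq_bigr => i _; rewrite !mulr_sumr.
by apply: eq_bigr => j _; rewrite mulrA.
Qed.

Lemma mulr_dsum (I J : finType) (c d e : R) (F : I -> J -> R) :
  c * (\sum_i \sum_j F i j) * d * e = \sum_i \sum_j c * F i j * d * e.
Proof.
rewrite -!mulrA mulr_suml mulr_sumr; apply: eq_bigr => i _.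
by rewrite mulr_suml mulr_sumr; apply: eq_bigr => j _; rewrite !mulrA.
Qed.

Lemma mulmx_sumZ (I J : finType) m n p (A : I -> 'M[R]_(m, n)) (B : J -> 'M[R]_(n, p))
    (c : I -> R) (d : J -> R) :
  (\sum_i c i *: A i) *m (\sum_j d j *: B j) =
  \sum_i \sum_j (c i * d j) *: (A i *m B j).
Proof.
rewrite mulmx_suml; apply: eq_bigr => i _; rewrite mulmx_sumr; apply: eq_bigr => j _.
by rewrite -scalemxAl -scalemxAr scalerA.
Qed.

End BigSums.

Section TraceDimension.
Variables (F : fieldType) (m : nat).

Lemma mxtrace_pid r : (r <= m)%N -> \tr (pid_mx r : 'M[F]_m) = r%:R.
Proof.
move=> le_rm; rewrite /mxtrace.
rewrite (eq_bigr (fun i : 'I_m => if (i < r)%N then 1 else 0)).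
  by rewrite -big_mkcond /= (big_ord_narrow le_rm) sumr_const card_ord.
by move=> i _; rewrite mxE eqxx; case: (i < r)%N.
Qed.

(* Conjugating by the Gaussian decomposition P = L D U makes D (U L) D = D. *)
Lemma mxtrace_idem (P : 'M[F]_m) : P *m P = P -> \tr P = (\rank P)%:R.
Proof.
move=> PP; set L := col_ebase P; set U := row_ebase P.
pose D : 'M[F]_m := pid_mx (\rank P).
have eP : P = L *m D *m U by rewrite mulmx_ebase.
have DD : D *m D = D by rewrite pid_mx_id ?rank_leq_col.
have DULD : D *m (U *m L) *m D = D.
  apply: (can_inj (mulKmx (col_ebase_unit P))).
  apply: (can_inj (mulmxK (row_ebase_unit P))).
  by rewrite -/L -/U -eP -PP eP !mulmxA.
rewrite {1}eP mxtrace_mulC mulmxA -DD mulmxA mxtrace_mulC [D *m _]mulmxA DULD.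
by rewrite mxtrace_pid ?rank_leq_col.
Qed.

Lemma mxtrace_skew_eq0 (A B : 'M[F]_m) (c : F) :
  A \in unitmx -> A *m B = c *: (B *m A) -> c != 1 -> \tr B = 0.
Proof.
move=> Au AB c1; have trB : \tr B = c * \tr B.
  rewrite -mxtraceZ -(mulmxK Au (c *: B)) -scalemxAl -AB -mulmxA mxtrace_mulC.
  by rewrite -mulmxA mulVmx ?mulmx1.
have : (1 - c) * \tr B = 0 by rewrite mulrBl mul1r -trB subrr.
by move/eqP; rewrite mulf_eq0 subr_eq0 eq_sym (negPf c1) => /eqP.
Qed.

Definition pow_mean (B : 'M[F]_m) N := N%:R^-1 *: \sum_(k < N) B ^+ k.

Lemma pow_mean_idem (B : 'M[F]_m) N :
  N%:R != 0 :> F -> B ^+ N = 1 -> pow_mean B N *m pow_mean B N = pow_mean B N.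
Proof.
move=> NF BN; set S := \sum_(k < N) B ^+ k.
have SB : S * B = S.
  rewrite {}/S; case: N NF BN => [|N] _ BN; first by rewrite !big_ord0 mul0r.
  rewrite mulr_suml; under eq_bigr do rewrite -exprSr.
  by rewrite big_ord_recr BN [RHS]big_ord_recl /= addrC.
have SBk k : S * B ^+ k = S by elim: k => [|k IHk]; rewrite ?mulr1 // exprS mulrA SB.
have SS : S * S = S *+ N.
  by rewrite {2}/S mulr_sumr (eq_bigr (fun _ => S)) ?sumr_const ?card_ord // => k _.
rewrite /pow_mean -scalemxAl -scalemxAr mulmxE SS scalerA -scaler_nat scalerA.
by rewrite -mulrA mulVf ?mulr1.
Qed.

Lemma weyl_pair_dvdn (A B : 'M[F]_m) N (zeta : F) :
  [pchar F] =i pred0 -> N.-primitive_root zeta -> A \in unitmx ->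
  A *m B = zeta *: (B *m A) -> B ^+ N = 1 -> (N %| m)%N.
Proof.
move=> F0 prim Au AB BN; have N_gt0 := prim_order_gt0 prim.
have NF := prim_root_natf_neq0 prim.
have ABk k : A *m B ^+ k = zeta ^+ k *: (B ^+ k *m A).
  elim: k => [|k IHk]; first by rewrite !expr0 mulmx1 mul1mx scale1r.
  rewrite exprSr -mulmxE mulmxA IHk -scalemxAl -mulmxA AB -scalemxAr mulmxA.
  by rewrite scalerA -exprSr mulmxE -exprSr.
have trBk k : (0 < k < N)%N -> \tr (B ^+ k) = 0.
  case/andP=> k_gt0 lt_kN; apply: mxtrace_skew_eq0 Au (ABk k) _.
  rewrite -(prim_order_dvd prim); apply: contraTN lt_kN => /(dvdn_leq k_gt0).
  by rewrite leqNgt.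
have trP : \tr (pow_mean B N) = N%:R^-1 * m%:R.
  rewrite mxtraceZ raddf_sum /=; congr (_ * _).
  rewrite -(prednK N_gt0) big_ord_recl expr0 mxtrace1 big1 ?addr0 // => k _.
  by apply: trBk; rewrite /= -[X in (_ < X)%N](prednK N_gt0) ltnS ltn_ord.
have := mxtrace_idem (pow_mean_idem NF BN); rewrite trP => trPE.
have : m%:R = (N * \rank (pow_mean B N))%:R :> F.
  by rewrite natrM -trPE mulrA mulfV ?mul1r.
by move/(pchar0_natr_inj F0) ->; apply: dvdn_mulr.
Qed.
End TraceDimension.

Section GradedSpaces.
Variables (K : fieldType) (G : finType) (mulG : G -> G -> G) (w : G -> G -> G -> K).
Local Notation gvs := (gvs G).
Local Notation tens := (tens mulG).
Local Notation assoc X Y Z := (@assoc K G mulG w X Y Z).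
Local Notation assoc_inv X Y Z := (@assoc_inv K G mulG w X Y Z).

Lemma compm_assoc_invr (X Y Z W : gvs) (F : gmx K (tens (tens X Y) Z) W) x y z q :
  compm F (assoc_inv X Y Z) (x, (y, z)) q =
  (w (gdeg x) (gdeg y) (gdeg z))^-1 * F ((x, y), z) q.
Proof.
rewrite /compm (bigD1 ((x, y), z)) //= [X in _ + X]big1 ?addr0.
  by rewrite /Defs.assoc_inv /= !eqxx mul1r.
move=> [[a b] c] /=; rewrite /Defs.assoc_inv /= => ne.
case: eqP => [ea|]; last by rewrite /= !mul0r.
case: eqP => [eb|]; last by rewrite /= !mul0r.
case: eqP => [ec|]; last by rewrite /= !mul0r.
by rewrite -ea -eb -ec eqxx in ne.
Qed.

Lemma compm_assocl (X Y Z W : gvs) (F : gmx K W (tens (tens X Y) Z)) a q :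
  compm (assoc X Y Z) F a q =
  F a ((q.1, q.2.1), q.2.2) * w (gdeg q.1) (gdeg q.2.1) (gdeg q.2.2).
Proof.
rewrite /compm (bigD1 ((q.1, q.2.1), q.2.2)) //= [X in _ + X]big1 ?addr0.
  by rewrite /Defs.assoc /= !eqxx mul1r.
move=> [[a' b] c] /=; rewrite /Defs.assoc /= => ne.
case: eqP => [ea|]; last by rewrite /= !mul0r mulr0.
case: eqP => [eb|]; last by rewrite /= !mul0r mulr0.
case: eqP => [ec|]; last by rewrite /= !mul0r mulr0.
by rewrite ea eb ec eqxx in ne.
Qed.

Lemma compm_assoc_invl (X Y Z W : gvs) (F : gmx K W (tens X (tens Y Z))) a r :
  compm (assoc_inv X Y Z) F a r =
  F a (r.1.1, (r.1.2, r.2)) * (w (gdeg r.1.1) (gdeg r.1.2) (gdeg r.2))^-1.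
Proof.
rewrite /compm (bigD1 (r.1.1, (r.1.2, r.2))) //= [X in _ + X]big1 ?addr0.
  by rewrite /Defs.assoc_inv /= !eqxx mul1r.
move=> [a' [b c]] /=; rewrite /Defs.assoc_inv /= => ne.
case: eqP => [ea|]; last by rewrite /= !mul0r mulr0.
case: eqP => [eb|]; last by rewrite /= !mul0r mulr0.
case: eqP => [ec|]; last by rewrite /= !mul0r mulr0.
by rewrite ea eb ec eqxx in ne.
Qed.

Lemma hexagon_rhsE (X Y Z : gvs) (p : forall Y : gvs, gmx K (tens X Y) (tens Y X))
    x y z y' z' x' :
  compm (assoc_inv Y Z X)
    (compm (tensm (@idm K G Y) (p Z))
      (compm (assoc Y X Z)
        (compm (tensm (p Y) (@idm K G Z)) (assoc_inv X Y Z)))) (x, (y, z)) ((y', z'), x')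
  = (w (gdeg x) (gdeg y) (gdeg z))^-1 * (w (gdeg y') (gdeg z') (gdeg x'))^-1 *
    \sum_x1 p Y (x, y) (y', x1) * w (gdeg y') (gdeg x1) (gdeg z) * p Z (x1, z) (z', x').
Proof.
rewrite compm_assoc_invl /= {1}/compm.
under [in LHS]eq_bigr => q _ do rewrite compm_assocl compm_assoc_invr.
rewrite sumr_pair (bigD1 y') //= [X in _ + X]big1 ?addr0; last first.
  move=> a ne; apply: big1 => b _; rewrite /tensm /idm /= eq_sym (negPf ne).
  by rewrite !(mul0r, mulr0).
rewrite sumr_pair mulr_sumr mulr_suml; apply: eq_bigr => x1 _.
rewrite (bigD1 z) //= [X in _ + X]big1 ?addr0; last first.
  move=> c ne; rewrite /tensm /idm /= eq_sym (negPf ne).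
  by rewrite !(mul0r, mulr0).
rewrite /tensm /idm /= !eqxx mulr1 mul1r; ring.
Qed.

Lemma giso_gdeg (X Y : gvs) (d : G) : giso K X Y ->
  (forall y : gbasis Y, gdeg y = d) -> forall x : gbasis X, gdeg x = d.
Proof.
case=> f [g [homf _ gf _]] dY x; apply/eqP/negP => /negP dx.
have := gf x x; rewrite /compm /idm eqxx big1 => [/esym/eqP|y _].
  by rewrite oner_eq0.
by rewrite homf ?mul0r // dY.
Qed.

Definition gmx_mx (A B : gvs) (h : gmx K A B) : 'M[K]_(#|gbasis A|, #|gbasis B|) :=
  \matrix_(i, j) h (enum_val i) (enum_val j).

Lemma gmx_mxM (A B C : gvs) (h : gmx K A B) (k : gmx K B C) :
  gmx_mx h *m gmx_mx k = gmx_mx (compm k h).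
Proof.
apply/matrixP => i j; rewrite !mxE; under eq_bigr do rewrite !mxE.
rewrite /compm [RHS](reindex (enum_val : 'I_#|gbasis B| -> _)) //.
by exists enum_rank => b _; rewrite ?enum_valK ?enum_rankK.
Qed.

Lemma gmx_mx1 (A : gvs) (h : gmx K A A) : mx_eq h (@idm K G A) -> gmx_mx h = 1%:M.
Proof. by move=> hE; apply/matrixP => i j; rewrite !mxE hE /idm (inj_eq enum_val_inj). Qed.

Lemma giso_card (X Y : gvs) : giso K X Y -> #|gbasis X| = #|gbasis Y|.
Proof.
case=> f [g [_ _ gf fg]]; apply/eqP; rewrite eqn_leq.
by rewrite (mulmx1_min (etrans (gmx_mxM f g) (gmx_mx1 gf)))
           (mulmx1_min (etrans (gmx_mxM g f) (gmx_mx1 fg))).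
Qed.

Lemma giso_const_gdeg (X Y : gvs) (d : G) :
  (forall x : gbasis X, gdeg x = d) -> (forall y : gbasis Y, gdeg y = d) ->
  #|gbasis X| = #|gbasis Y| -> giso K X Y.
Proof.
move=> dX dY cardXY.
pose e (x : gbasis X) : gbasis Y := enum_val (cast_ord cardXY (enum_rank x)).
pose e' (y : gbasis Y) : gbasis X := enum_val (cast_ord (esym cardXY) (enum_rank y)).
have e'K : cancel e' e by move=> y; rewrite /e /e' enum_valK cast_ordKV enum_rankK.
have eK : cancel e e' by move=> x; rewrite /e /e' enum_valK cast_ordK enum_rankK.
exists (fun x y => (e x == y)%:R), (fun y x => (e x == y)%:R); split.
- by move=> x y; rewrite dX dY eqxx.
- by move=> y x; rewrite dX dY eqxx.
- move=> x x'; rewrite /compm /idm (bigD1 (e x)) //= [X in _ + X]big1 ?addr0.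
    by rewrite eqxx mul1r (inj_eq (can_inj eK)) eq_sym.
  by move=> y /negPf; rewrite eq_sym => ->; rewrite mul0r.
- move=> y y'; rewrite /compm /idm (bigD1 (e' y)) //= [X in _ + X]big1 ?addr0.
    by rewrite e'K eqxx mul1r.
  move=> x ne; case: eqP => [ex|_]; last by rewrite mul0r.
  by rewrite -ex eK eqxx in ne.
Qed.

End GradedSpaces.

Lemma coboundary_sym (L : fieldType) (G : zmodType) (gam : G -> G -> L) :
  is_coboundary gam -> forall g h, gam g h = gam h g.
Proof. by case=> mu [_ gamE] g h; rewrite !gamE addrC (mulrC (mu g)). Qed.

Section Example.
Variables (n' : nat) (K : fieldType) (zeta : K).
Hypothesis prim : (n'.+2).-primitive_root zeta.
Local Notation N := n'.+2.
Local Notation w := (omega_ex zeta).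
Local Notation gam := (gamma_wz w (e1 N)).

Lemma val_Zp1 : (1 %% (Zp_trunc N).+2 = 1)%N.
Proof. by rewrite modn_small. Qed.

Lemma omega_ex_e1l g h : w (e1 N) g h = zeta ^+ (c2 g * c3 h).
Proof. by rewrite /omega_ex /c1 /e1 /= val_Zp1 mul1n. Qed.

Lemma omega_ex_e1m g h : w g (e1 N) h = 1.
Proof. by rewrite /omega_ex /c2 /e1 /= muln0 mul0n expr0. Qed.

Lemma omega_ex_e1r g h : w g h (e1 N) = 1.
Proof. by rewrite /omega_ex /c3 /e1 /= muln0 expr0. Qed.

Lemma gamma_exE g h : gam g h = zeta ^+ (c2 g * c3 h).
Proof. by rewrite /gamma_wz omega_ex_e1r omega_ex_e1m omega_ex_e1l divr1 mul1r. Qed.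

Definition e2 : G3 N := (0, 1, 0).
Definition e3 : G3 N := (0, 0, 1).

Lemma gamma_ex_not_coboundary : ~ is_coboundary gam.
Proof.
move/coboundary_sym/(_ e2 e3)/eqP; rewrite !gamma_exE /c2 /c3 /= val_Zp1.
by rewrite muln1 mul0n expr0 -(prim_order_dvd prim) gtnNdvd.
Qed.

Lemma zeta_neq0 : zeta != 0.
Proof. by rewrite (prim_root_eq0 prim). Qed.

Lemma zeta_mulmodr a b : zeta ^+ (a * (b %% N)) = zeta ^+ (a * b).
Proof. by rewrite mulnC exprM (prim_expr_mod prim) -exprM mulnC. Qed.

Lemma zeta_modmull a b : zeta ^+ ((a %% N) * b) = zeta ^+ (a * b).
Proof. by rewrite exprM (prim_expr_mod prim) -exprM. Qed.

(* Clock-and-shift matrices; by [weyl_mxM] and [gamma_exE] they form a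
   projective representation with multiplier gamma, trivial on e1. *)
Definition weyl_mx (g : G3 N) : 'M[K]_N :=
  \matrix_(r, s) ((r == (s : 'Z_N) + g.2 :> 'Z_N)%:R * zeta ^+ (c2 g * s)).

Lemma weyl_mx0 : weyl_mx 0 = 1%:M.
Proof. by apply/matrixP => r s; rewrite !mxE addr0 /c2 /= mul0n expr0 mulr1. Qed.

Lemma weyl_mxM g h : weyl_mx g *m weyl_mx h = zeta ^+ (c2 g * c3 h) *: weyl_mx (g + h).
Proof.
apply/matrixP => r t; rewrite !mxE (bigD1 ((t : 'Z_N) + h.2)) //= big1 ?addr0; last first.
  by move=> s /negPf; rewrite !mxE eq_sym => ->; rewrite mul0r mulr0.
rewrite !mxE eqxx mul1r -addrA (addrC h.2) mulrCA -mulrA; congr (_ * _).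
rewrite /c2 /c3 /= /Zp_trunc /= zeta_mulmodr zeta_modmull -!exprD; congr (zeta ^+ _).
by rewrite mulnDr mulnDl addnA [(_ * h.2 + _)%N]addnC.
Qed.

Lemma sum_prim_root_orth (x y : nat) : (x < N)%N -> (y < N)%N ->
  \sum_(i < N) zeta ^+ (i * x) * zeta^-1 ^+ (i * y) = (x == y)%:R * N%:R.
Proof.
move=> xN yN.
have zy0 : zeta ^+ y != 0 by rewrite expf_neq0 // zeta_neq0.
rewrite (eq_bigr (fun i : 'I_N => (zeta ^+ x / zeta ^+ y) ^+ i)); last first.
  by move=> i _; rewrite exprMn -exprVn -!exprM !(mulnC i).
case: eqP => [-> | ne].
  rewrite divff // (eq_bigr (fun _ => 1)) ?sumr_const ?card_ord ?mul1r //.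
  by move=> i _; rewrite expr1n.
set q := _ / _.
have q1 : q != 1.
  rewrite /q; apply/negP => /eqP e; apply: ne; apply/eqP.
  have : zeta ^+ x == zeta ^+ y by rewrite -[zeta ^+ y]mul1r -e mulfVK.
  by rewrite (eq_prim_root_expr prim) !modn_small.
have qN : q ^+ N = 1.
  rewrite /q exprMn -exprVn -!exprM !(mulnC _ N) !exprM exprVn.
  by rewrite (prim_expr_order prim) invr1 !expr1n mulr1.
have := subrX1 q N; rewrite qN subrr => /esym/eqP; rewrite mulf_eq0 subr_eq0 (negPf q1) /=.
by move/eqP => ->; rewrite mul0r.
Qed.

(* The i-th component is the representation in which e1 acts by zeta^i. *)
Definition tga_mx (a : {ffun G3 N -> K}) : {ffun 'I_N -> 'M[K]_N} :=
  [ffun i : 'I_N => \sum_(g : G3 N) (a g * zeta ^+ (i * c1 g)) *: weyl_mx g].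

Lemma tga_mx_lin (c : K) (a b : {ffun G3 N -> K}) :
  tga_mx [ffun g => c * a g + b g] = [ffun i => c *: tga_mx a i + tga_mx b i].
Proof.
apply/ffunP => i; rewrite !ffunE scaler_sumr -big_split /=.
by apply: eq_bigr => g _; rewrite ffunE scalerA -scalerDl mulrA mulrDl.
Qed.

Lemma tga_mx1 : tga_mx (tga_one gam) = [ffun _ => 1%:M].
Proof.
apply/ffunP => i; rewrite !ffunE (bigD1 0) //= big1 ?addr0; last first.
  by move=> g /negPf gne; rewrite ffunE gne mul0r mul0r scale0r.
rewrite ffunE eqxx gamma_exE /c1 /c2 /c3 /= muln0 expr0 divr1 muln0 expr0 mulr1.
by rewrite scale1r weyl_mx0.
Qed.

Lemma tga_mxM (a b : {ffun G3 N -> K}) :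
  tga_mx (tga_mul gam a b) = [ffun i => tga_mx a i *m tga_mx b i].
Proof.
apply/ffunP => i; rewrite !ffunE mulmx_sumZ.
rewrite (eq_bigr (fun k => \sum_g \sum_(h | g + h == k)
   (a g * b h * gam g h * zeta ^+ (i * c1 k)) *: weyl_mx k)); last first.
  move=> k _; rewrite ffunE mulr_suml scaler_suml; apply: eq_bigr => g _.
  by rewrite mulr_suml scaler_suml.
rewrite exchange_big; apply: eq_bigr => g _.
rewrite (exchange_big_dep xpredT) //=; apply: eq_bigr => h _.
rewrite (eq_bigl (fun k => k == g + h)); last by move=> k; rewrite eq_sym.
rewrite big_pred1_eq weyl_mxM scalerA gamma_exE; congr (_ *: _).
rewrite /c1 /= /Zp_trunc /= zeta_mulmodr mulnDr exprD; ring.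
Qed.

(* Fourier inversion in the e1- and e2-coordinates; the e3-coordinate of g is
   read off from the position of the shift. *)
Definition mx_tga (M : {ffun 'I_N -> 'M[K]_N}) : {ffun G3 N -> K} :=
  [ffun g : G3 N => (N%:R ^+ 2)^-1 * \sum_(i < N) \sum_(s < N)
     (zeta^-1 ^+ (i * c1 g) * zeta^-1 ^+ (s * c2 g) * M i ((s : 'Z_N) + g.2) s)].

Lemma tga_mxE a i r s : tga_mx a i r s =
  \sum_g a g * zeta ^+ (i * c1 g) * ((r == (s : 'Z_N) + g.2 :> 'Z_N)%:R * zeta ^+ (c2 g * s)).
Proof. by rewrite ffunE summxE; apply: eq_bigr => g _; rewrite !mxE mulrA. Qed.

Lemma tga_mxK : cancel tga_mx mx_tga.
Proof.
move=> a; apply/ffunP => g; rewrite ffunE.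
under eq_bigr do under eq_bigr do rewrite tga_mxE mulr_sumr.
under eq_bigr do rewrite exchange_big.
rewrite exchange_big /=.
rewrite (eq_bigr (fun j => a j * (g.2 == j.2)%:R * ((c1 j == c1 g)%:R * N%:R) *
                         ((c2 j == c2 g)%:R * N%:R))); last first.
  move=> j _; rewrite -!sum_prim_root_orth ?ltn_ord // -mulrA.
  rewrite [in RHS]mulr_suml [in RHS]mulr_sumr.
  apply: eq_bigr => i _; rewrite [in RHS]mulr_sumr [in RHS]mulr_sumr; apply: eq_bigr => i0 _.
  rewrite (inj_eq (addrI _)) (mulnC (c2 j)); ring.
rewrite (bigD1 g) //= big1 ?addr0; last first.
  move=> j jg; case: eqP => [eq3|]; last by move=> _; rewrite !(mul0r, mulr0).
  case: eqP => [eq1|]; last by move=> _; rewrite !(mul0r, mulr0).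
  case: eqP => [eq2|]; last by move=> _; rewrite !(mul0r, mulr0).
  exfalso; move/negP: jg; apply; apply/eqP.
  case: j eq1 eq2 eq3 => [[j1 j2] j3]; case: g => [[g1 g2] g3] /= eq1 eq2 eq3.
  by rewrite /c1 /c2 /= in eq1 eq2; rewrite eq3; congr (_, _, _); apply: val_inj.
rewrite !eqxx mulr1 !mul1r -mulrA -expr2 mulrCA mulVf ?mulr1 //.
by rewrite expf_neq0 // (prim_root_natf_neq0 prim).
Qed.

Lemma sum_G3 (F : G3 N -> K) :
  \sum_(g : G3 N) F g = \sum_(x : 'Z_N) \sum_(y : 'Z_N) \sum_(z : 'Z_N) F (x, y, z).
Proof.
rewrite (pair_bigA _ (fun (x : 'Z_N) y => \sum_(z : 'Z_N) F (x, y, z))) /=.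
rewrite (pair_bigA _ (fun (p : 'Z_N * 'Z_N) (z : 'Z_N) => F (p.1, p.2, z))) /=.
by apply: eq_bigr => -[[]].
Qed.

Lemma tga_mx_mx_tgaE M i r s : tga_mx (mx_tga M) i r s =
  \sum_(i2 < N) \sum_(s0 < N) N%:R^-2 * M i2 ((s0 : 'Z_N) + (r - s)) s0 *
    (((i : nat) == i2)%:R * N%:R) * (((s : nat) == s0)%:R * N%:R).
Proof.
rewrite tga_mxE; under eq_bigr do rewrite ffunE.
rewrite sum_G3 /=; under eq_bigr do rewrite exchange_big /=.
rewrite exchange_big /= (bigD1 ((r : 'Z_N) - s)) //= [X in _ + X]big1 ?addr0; last first.
  move=> z zne; apply: big1 => x _; apply: big1 => y _.
  have -> : (r == (s : 'Z_N) + z) = false.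
    by apply/negbTE; apply: contra zne => /eqP ->; rewrite addrC addKr.
  by rewrite /= !(mul0r, mulr0).
under [RHS]eq_bigr => i2 _ do under eq_bigr => s0 _ do
  rewrite -!sum_prim_root_orth ?ltn_ord // mulr_sum2.
under [RHS]eq_bigr do rewrite exchange_big.
rewrite [RHS]exchange_big.
under [RHS]eq_bigr do under eq_bigr do rewrite exchange_big.
under [RHS]eq_bigr do rewrite exchange_big.
have -> : (r == (s : 'Z_N) + (r - s)) by rewrite addrC subrK.
apply: eq_bigr => x _; apply: eq_bigr => y _; rewrite mulr_dsum.
apply: eq_bigr => i2 _; apply: eq_bigr => s0 _.
rewrite /c1 /c2 /= (mulnC s0) (mulnC i2) (mulnC y s) (mulnC x i); ring.
Qed.

Lemma mx_tgaK : cancel mx_tga tga_mx.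
Proof.
move=> M; apply/ffunP => i; apply/matrixP => r s; rewrite tga_mx_mx_tgaE.
rewrite (bigD1 i) //= [X in _ + X]big1 ?addr0; last first.
  move=> i2 ne; apply: big1 => s0 _; case: eqP => [e|_]; last by rewrite !(mul0r, mulr0).
  by case/eqP: ne; apply: val_inj; apply/esym.
rewrite (bigD1 s) //= [X in _ + X]big1 ?addr0; last first.
  move=> s0 ne; have -> : ((s : nat) == s0) = false by rewrite eq_sym; exact: negbTE ne.
  by rewrite !(mul0r, mulr0).
rewrite !eqxx !mul1r addrC subrK.
rewrite (_ : _ * _ = M i r s * (N%:R^-2 * (N%:R * N%:R))); last by ring.
by rewrite -expr2 mulVf ?mulr1 // expf_neq0 // (prim_root_natf_neq0 prim).
Qed.

(* [Xone 0] is convertible to the unit object [unito +%R 0]. *)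
Definition Xone (g : G3 N) : gvs (G3 N) := @GVS (G3 N) unit (fun _ => g).

Section HalfBraidingObstruction.
Variables (X : gvs (G3 N)) (p : forall Y : gvs (G3 N), gmx K (tens +%R X Y) (tens +%R Y X)).
Hypotheses (p_hb : half_braiding 0 w p) (dX : forall x : gbasis X, gdeg x = e1 N).

Definition braid_coef g (x x' : gbasis X) := @p (Xone g) (x, tt) (tt, x').

(* Naturality along the morphism X_g (x) X_h -> X_(g+h), then the hexagon. *)
Lemma braid_coefM g h x x' :
  \sum_x1 braid_coef g x x1 * braid_coef h x1 x' =
  zeta ^+ (c2 g * c3 h) * braid_coef (g + h) x x'.
Proof.
case: p_hb => _ p_nat _ p_hex.
pose f : gmx K (tens +%R (Xone g) (Xone h)) (Xone (g + h)) := fun _ _ => 1.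
have homf : is_hom f by move=> [a b] c /=; rewrite eqxx.
have := p_nat _ _ f homf (x, (tt, tt)) (tt, x').
rewrite /compm sumr_pair (bigD1 x) //= [X in _ + X]big1 ?addr0; last first.
  by move=> a ne; rewrite sumr_unit /tensm /idm /= eq_sym (negPf ne) !mul0r.
rewrite sumr_unit /tensm /idm /f /= eqxx !mul1r !sumr_pair !sumr_unit /= => fE.
rewrite (bigD1 x') //= big1 ?addr0 in fE; last first.
  by move=> a ne; rewrite (negPf ne) !mulr0.
rewrite eqxx mul1r !mulr1 in fE.
rewrite /braid_coef fE p_hex hexagon_rhsE /= !dX omega_ex_e1l omega_ex_e1r invr1 mulr1.
under [in RHS]eq_bigr do rewrite dX omega_ex_e1m mulr1.
by rewrite mulrA mulfV ?mul1r // expf_neq0 // zeta_neq0.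
Qed.

Lemma braid_coef0 x x' : braid_coef 0 x x' = (x == x')%:R.
Proof. by case: p_hb => _ _ p_unit _; apply: p_unit. Qed.

Definition braid_mx g : 'M[K]_#|gbasis X| := gmx_mx (braid_coef g).

Lemma braid_mxM g h :
  braid_mx g *m braid_mx h = zeta ^+ (c2 g * c3 h) *: braid_mx (g + h).
Proof.
by rewrite gmx_mxM; apply/matrixP => i j; rewrite !mxE /compm braid_coefM.
Qed.

Lemma braid_mx0 : braid_mx 0 = 1%:M.
Proof. exact/gmx_mx1/braid_coef0. Qed.

Lemma braid_mx_e3X k : braid_mx e3 ^+ k = braid_mx (0, 0, k%:R).
Proof.
elim: k => [|k IHk]; first by rewrite expr0 braid_mx0.
rewrite exprSr IHk -mulmxE braid_mxM /c2 /= mul0n expr0 scale1r.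
by congr braid_mx; congr (_, _, _); rewrite ?addr0 // -mulrSr.
Qed.

Lemma half_braiding_dvdn : [pchar K] =i pred0 -> (N %| #|gbasis X|)%N.
Proof.
move=> K0; apply: (weyl_pair_dvdn K0 prim (A := braid_mx e2) (B := braid_mx e3)).
- have Ne2 : braid_mx (- e2) *m braid_mx e2 = 1%:M.
    by rewrite braid_mxM addNr braid_mx0 /c3 /= muln0 expr0 scale1r.
  by case: (mulmx1_unit Ne2).
- by rewrite !braid_mxM addrC /c2 /c3 /= val_Zp1 muln1 expr1 mul0n expr0 scale1r.
- by rewrite braid_mx_e3X pchar_Zp // braid_mx0.
Qed.

End HalfBraidingObstruction.

Section WeylHalfBraiding.
Variable q : nat.

Definition Xweyl : gvs (G3 N) := @GVS (G3 N) ('I_q * 'I_N)%type (fun _ => e1 N).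

Definition weyl_coef g (x x' : 'I_q * 'I_N) : K :=
  (x.1 == x'.1)%:R * weyl_mx g x.2 x'.2.

Definition weyl_braiding (Y : gvs (G3 N)) : gmx K (tens +%R Xweyl Y) (tens +%R Y Xweyl) :=
  fun a b => (a.2 == b.1)%:R * weyl_coef (gdeg a.2) a.1 b.2.

Lemma weyl_coefM g h x x' :
  \sum_x1 weyl_coef g x x1 * weyl_coef h x1 x' =
  zeta ^+ (c2 g * c3 h) * weyl_coef (g + h) x x'.
Proof.
rewrite sumr_pair (bigD1 x.1) //= [X in _ + X]big1 ?addr0; last first.
  by move=> a ne; apply: big1 => b _; rewrite /weyl_coef /= eq_sym (negPf ne) !mul0r.
rewrite /weyl_coef /=; under eq_bigr do rewrite eqxx mul1r mulrCA.
rewrite -mulr_sumr mulrCA.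
by have := congr1 (fun M : 'M[K]_N => M x.2 x'.2) (weyl_mxM g h); rewrite /= !mxE => ->.
Qed.

Lemma weyl_braiding_half_braiding : half_braiding 0 w weyl_braiding.
Proof.
split.
- move=> Y [x y] [y' x'] /=; rewrite /weyl_braiding /=.
  by have [<-|_] := eqVneq y y'; rewrite ?mul0r // addrC eqxx.
- move=> Y Y' f homf [x y] [y2 x'] /=; rewrite /compm.
  rewrite sumr_pair (bigD1 x) //= [X in _ + X]big1 ?addr0; last first.
    by move=> a ne; apply: big1 => b _; rewrite /tensm /idm /= eq_sym (negPf ne) !mul0r.
  rewrite (bigD1 y2) //= [X in _ + X]big1 ?addr0; last first.
    by move=> b ne; rewrite /weyl_braiding /= (negPf ne) !(mul0r, mulr0).
  rewrite sumr_pair (bigD1 y) //= [X in _ + X]big1 ?addr0; last first.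
    by move=> b ne; apply: big1 => a _; rewrite /weyl_braiding /= eq_sym (negPf ne) !mul0r.
  rewrite (bigD1 x') //= [X in _ + X]big1 ?addr0; last first.
    by move=> b ne; rewrite /tensm /idm /= (negPf ne) !(mul0r, mulr0).
  rewrite /tensm /idm /weyl_braiding /= !eqxx !(mul1r, mulr1).
  case: (eqVneq (gdeg y) (gdeg y2)) => [->|ne]; first by rewrite mulrC.
  by rewrite homf // !(mul0r, mulr0).
- move=> [a b] [a' b']; rewrite /weyl_braiding /weyl_coef /= weyl_mx0 mxE mul1r.
  by rewrite xpair_eqE; case: (a == a'); case: (b == b'); rewrite /= ?(mul1r, mul0r).
- move=> Y Z [x [y z]] [[y' z'] x']; rewrite hexagon_rhsE /=.
  rewrite omega_ex_e1l omega_ex_e1r omega_ex_e1m invr1 mulr1 /weyl_braiding /= xpair_eqE.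
  have [_|ne] := eqVneq y y'; last first.
    by rewrite /= mul0r big1 ?mulr0 // => b _; rewrite !mul0r.
  have [_|ne] := eqVneq z z'; last first.
    by rewrite /= mul0r big1 ?mulr0 // => b _; rewrite !(mul0r, mulr0).
  rewrite /= mul1r; under [in RHS]eq_bigr do rewrite !mul1r mulr1.
  by rewrite weyl_coefM mulrA mulVf ?mul1r // expf_neq0 // zeta_neq0.
Qed.

Lemma Xweyl_iso : giso K Xweyl (Xsum (e1 N) (q * N)).
Proof. by apply: giso_const_gdeg => //=; rewrite card_prod !card_ord. Qed.

End WeylHalfBraiding.

End Example.
Unset Implicit Arguments.
Unset Strict Implicit.

Theorem mainTheorem14 (n : nat) (K : closedFieldType) (zeta : K) :
  (1 < n)%N -> [pchar K] =i pred0 -> n.-primitive_root zeta ->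
  let w := omega_ex zeta in
  let z := e1 n in
  let gam := gamma_wz w z in
  [/\ (forall g h : G3 n, gam g h = zeta ^+ (c2 g * c3 h)),
      ~ is_coboundary gam,
      tga_iso_sum_mat gam n n &
      forall m : nat, (1 <= m)%N ->
        (in_char_image +%R 0 w (Xsum z m) <-> (n %| m)%N)].
Proof.
case: n => [|[|n']] // _ K0 prim /=; split.
- exact: gamma_exE.
- exact: gamma_ex_not_coboundary prim.
- exists (tga_mx zeta); split.
  + exact: tga_mx_lin.
  + by exists (mx_tga zeta); [apply: tga_mxK | apply: mx_tgaK].
  + exact: tga_mxM.
  + exact: tga_mx1.
- move=> m _; split.
  + case=> X [p [p_hb isoX]].
    have <- : #|gbasis X| = m by rewrite (giso_card isoX) card_ord.
    by apply: (half_braiding_dvdn prim p_hb) => //; apply: giso_gdeg isoX _.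
  + case/dvdnP => q ->; exists (Xweyl n' q), (@weyl_braiding n' K zeta q).
    by split; [exact: weyl_braiding_half_braiding | exact: Xweyl_iso].
Qed.
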